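(* Let $t_0\in\mathbb{R}$, $q_0\ge 0$, $\mu>0$, $\alpha>0$, let $X:[t_0,+\infty)\to[0,+\infty)$ be continuous, and let $q$ be the solution of $$q'(t)=X(t)-\Big[\mu+e^{-\alpha q(t)}\big(\min\{\mu,X(t)\}-\mu\big)\Big],\qquad q(t_0)=q_0.$$ Define the exit time $\Lambda(t)=t+\dfrac{q(t)}{\mu}$. Then for all $t_0\le t<s$ we have $\Lambda(t)<\Lambda(s)$.
   Context: This ODE is the logistic queue model: $q$ is the queue size, $X$ the inflow, $\mu>0$ the maximum outflow rate and $\alpha>0$ a fixed model parameter. $\Lambda(t)$ is interpreted as the exit time of an entity arriving at time $t$. *)

From Stdlib Require Import Reals.
From Coquelicot Require Export Coquelicot.
Open Scope R_scope.

Definition queue_rhs (mu alpha x qv : R) : R :=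
  x - (mu + exp (- alpha * qv) * (Rmin mu x - mu)).

Definition exit_time (mu : R) (q : R -> R) (t : R) : R := t + q t / mu.

(* The exit time has derivative Λ' = 1 + q'/μ = (X + e^{-αq} (μ - min(μ, X)))/μ, which is
   strictly positive because X ≥ 0 and e^{-αq} > 0.  By the mean value theorem Λ is
   strictly increasing on (t0, +∞), and right-continuity of q at t0 extends this to t = t0. *)
From Stdlib Require Import Reals Lra Psatz.
From Coquelicot Require Import Coquelicot.
Open Scope R_scope.

Lemma queue_rhs_gt_opp (mu alpha x qv : R) :
  0 < mu -> 0 <= x -> - mu < queue_rhs mu alpha x qv.
Proof.
  intros Hmu Hx. unfold queue_rhs.
  pose proof (exp_pos (- alpha * qv)).
  unfold Rmin; destruct (Rle_dec mu x); nra.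
Qed.

Lemma is_derive_exit_time (mu : R) (q : R -> R) (t dq : R) :
  mu <> 0 -> is_derive q t dq -> is_derive (exit_time mu q) t (1 + dq / mu).
Proof.
  intros Hmu Hq.
  pose proof (is_derive_div q (fun _ => mu) t dq 0 Hq (is_derive_const mu t) Hmu) as Hdiv.
  replace (1 + dq / mu) with (plus one ((dq * mu - q t * 0) / mu ^ 2))
    by (unfold plus, one; simpl; field; exact Hmu).
  exact (is_derive_plus (fun t => t) _ t _ _ (is_derive_id t) Hdiv).
Qed.

Lemma filterlim_id_at_right (a : R) :
  filterlim (fun t : R => t) (at_right a) (locally a).
Proof.
  apply (filterlim_filter_le_1 (G := at_right a) (F := locally a)).
  - apply filter_le_within.
  - apply filterlim_id.
Qed.

Lemma filterlim_exit_time_at_right (mu a : R) (q : R -> R) :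
  filterlim q (at_right a) (locally (q a)) ->
  filterlim (exit_time mu q) (at_right a) (locally (exit_time mu q a)).
Proof.
  intros Hq.
  pose proof (filterlim_comp _ _ _ _ _ _ _ _ Hq (filterlim_scal_r (/ mu) (q a))) as Hscal.
  pose proof (filterlim_comp_2 _ _ _ (filterlim_id_at_right a) Hscal (filterlim_plus a _))
    as Hsum.
  unfold exit_time.
  replace (a + q a / mu) with (plus a (scal (/ mu) (q a)))
    by (unfold plus, scal; simpl; unfold mult; simpl; unfold Rdiv; ring).
  eapply filterlim_ext; [|exact Hsum].
  intros t; simpl. unfold plus, scal; simpl; unfold mult; simpl; unfold Rdiv; ring.
Qed.

Lemma increasing_of_is_derive_pos (f df : R -> R) (a : R) :
  (forall t, a < t -> is_derive f t (df t)) -> (forall t, a < t -> 0 < df t) ->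
  forall t s, a < t -> t < s -> f t < f s.
Proof.
  intros Hf Hdf t s Ht Hts.
  destruct (MVT_gen f t s df) as [c [Hc Hmvt]].
  - intros x Hx. rewrite Rmin_left in Hx by lra. apply Hf. lra.
  - intros x Hx. rewrite Rmin_left in Hx by lra.
    apply continuity_pt_filterlim,
      (ex_derive_continuous (K := R_AbsRing) (V := R_NormedModule)).
    exists (df x). apply Hf. lra.
  - rewrite Rmin_left, Rmax_right in Hc by lra.
    pose proof (Hdf c ltac:(lra)). nra.
Qed.

Lemma right_continuous_increasing_lt (f : R -> R) (a : R) :
  filterlim f (at_right a) (locally (f a)) ->
  (forall t s, a < t -> t < s -> f t < f s) ->
  forall s, a < s -> f a < f s.
Proof.
  intros Hfa Hf s Hs.
  set (m := (a + s) / 2).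
  assert (Ham : 0 < m - a) by (unfold m; lra).
  assert (Hle : f a <= f m).
  { apply (filterlim_le (F := at_right a) f (fun _ => f m) (f a) (f m)); auto.
    - exists (mkposreal _ Ham). intros u Hu Hau.
      apply Rlt_le, Hf; [exact Hau|].
      unfold ball in Hu; simpl in Hu; unfold AbsRing_ball, abs, minus, plus, opp in Hu;
        simpl in Hu. apply Rabs_def2 in Hu. lra.
    - apply filterlim_const. }
  pose proof (Hf m s ltac:(unfold m; lra) ltac:(unfold m; lra)). lra.
Qed.

Theorem mainTheorem5 (t0 q0 mu alpha : R) (X q : R -> R)
  (Hq0 : 0 <= q0) (Hmu : 0 < mu) (Halpha : 0 < alpha)
  (HXnn : forall t, t0 <= t -> 0 <= X t)
  (HXc : forall t, t0 < t -> continuous X t)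
  (HXc0 : filterlim X (at_right t0) (locally (X t0)))
  (Hinit : q t0 = q0)
  (Hq_cont0 : filterlim q (at_right t0) (locally (q t0)))
  (Hode : forall t, t0 < t -> is_derive q t (queue_rhs mu alpha (X t) (q t))) :
  forall t s, t0 <= t -> t < s -> exit_time mu q t < exit_time mu q s.
Proof.
  set (dexit t := 1 + queue_rhs mu alpha (X t) (q t) / mu).
  assert (Hder : forall t, t0 < t -> is_derive (exit_time mu q) t (dexit t)).
  { intros t Ht. apply is_derive_exit_time; [lra | exact (Hode t Ht)]. }
  assert (Hdpos : forall t, t0 < t -> 0 < dexit t).
  { intros t Ht. unfold dexit.
    pose proof (queue_rhs_gt_opp mu alpha (X t) (q t) Hmu (HXnn t ltac:(lra))).
    replace (1 + queue_rhs mu alpha (X t) (q t) / mu)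
      with ((mu + queue_rhs mu alpha (X t) (q t)) / mu) by (field; lra).
    apply Rdiv_lt_0_compat; lra. }
  pose proof (increasing_of_is_derive_pos _ _ t0 Hder Hdpos) as Hincr.
  intros t s Ht Hts.
  destruct (Rle_lt_or_eq_dec _ _ Ht) as [Ht0 | <-].
  - exact (Hincr t s Ht0 Hts).
  - exact (right_continuous_increasing_lt _ t0
      (filterlim_exit_time_at_right mu t0 q Hq_cont0) Hincr s Hts).
Qed.
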